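(* Assume $\omega_\ell>0$, $\sum_\ell\omega_\ell=1$, $\sum_\ell\omega_\ell d_\ell>0$, and that for a constant $c_1\ge1$, $\|\omega\|_\infty\sum_\ell\sum_{j\in J}p^{(\ell)}_{ij}\le c_1\sum_\ell\sum_{j\in J}\omega_\ell p^{(\ell)}_{ij}$ for all $i\in[n]$, $J\subseteq[n]$. Fix $\alpha>0$ and $r\ge1$. Then there is a constant $C=C(c_1)$ such that with probability at least $1-n^{-r}$: for every $m\in[n]$ with $\sqrt{m/n}\le\alpha$ and every $I,J\subseteq[n]$ with $|I|=|J|=m$, all but at most $m\|\omega\|_\infty/(\alpha\sum_\ell\omega_\ell d_\ell)$ indices $i\in I$ satisfy $\sum_{j\in J}\bar A_{ij}\le Cr\alpha\sum_\ell\omega_\ell d_\ell$.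
   Context: Here $A^{(1)},\dots,A^{(L)}$ are random $n\times n$ matrices whose entries $A^{(\ell)}_{ij}\sim\mathrm{Bern}(p^{(\ell)}_{ij})$, $i,j\in[n]$, $\ell\in[L]$, are all mutually independent (no symmetry imposed). $\bar A=\sum_\ell\omega_\ell A^{(\ell)}$, $d_\ell=\max_{i,j}np^{(\ell)}_{ij}$, $\|\omega\|_\infty=\max_\ell\omega_\ell$. *)

From HB Require Import structures.
From mathcomp Require Import all_boot all_order all_algebra.
From mathcomp Require Import all_classical all_reals all_analysis.
Set Implicit Arguments. Unset Strict Implicit. Unset Printing Implicit Defensive.
Import Order.TTheory GRing.Theory Num.Theory.
Local Open Scope ring_scope.

(* Sample space: an outcome assigns a bit to every entry A^(l)_{ij},
   indexed by k = (l, i, j). *)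
Definition outcome (L n : nat) := {ffun 'I_L * 'I_n * 'I_n -> bool}.

Definition bern_weight (R : realType) (L n : nat)
  (p : 'I_L -> 'I_n -> 'I_n -> R) (x : outcome L n) : R :=
  \prod_(k : 'I_L * 'I_n * 'I_n)
     (if x k then p k.1.1 k.1.2 k.2 else 1 - p k.1.1 k.1.2 k.2).

Definition Prob (R : realType) (L n : nat)
  (p : 'I_L -> 'I_n -> 'I_n -> R) (E : outcome L n -> Prop) : R :=
  \sum_(x : outcome L n | `[< E x >]) bern_weight p x.

Definition Amat (R : realType) (L n : nat) (x : outcome L n) (l : 'I_L)
  (i j : 'I_n) : R := (x (l, i, j) : nat)%:R.

Definition Abar (R : realType) (L n : nat) (w : 'I_L -> R) (x : outcome L n)
  (i j : 'I_n) : R := \sum_(l < L) w l * Amat R x l i j.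

(* d_l = max_{i,j} n p^(l)_{ij}  (entries are nonnegative, so max with 0 base). *)
Definition dl (R : realType) (L n : nat) (p : 'I_L -> 'I_n -> 'I_n -> R)
  (l : 'I_L) : R := \big[Num.max/0]_(i < n) \big[Num.max/0]_(j < n) (n%:R * p l i j).

(* ||w||_inf = max_l w_l (weights are positive). *)
Definition wmax (R : realType) (L : nat) (w : 'I_L -> R) : R :=
  \big[Num.max/0]_(l < L) w l.

From HB Require Import structures.
From mathcomp Require Import all_boot all_order all_algebra.
From mathcomp Require Import all_classical all_reals all_analysis.
From mathcomp Require Import ring lra.
Import Order.TTheory GRing.Theory Num.Theory.
Local Open Scope ring_scope.
Set Implicit Arguments. Unset Strict Implicit. Unset Printing Implicit Defensive.

(* Proof of the theorem with C = 12.  Write D = sum_l w_l d_l,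
   W = ||w||_inf and t = 12 r alpha D.  If the event fails at a level m, some
   column set J with |J| = m and some set B of at most m rows, more than
   m W / (alpha D) of them, have every row sum over J above t, so the block
   sum S_{B,J} = sum_{i in B, j in J} Abar_ij exceeds |B| t.
   For such a block, a Chernoff bound with lam = u / W, u = 1 + ln(n alpha/m),
   gives E exp(lam (S_{B,J} - |B| t)) <= exp(-u m (12 r - 4)).  There are at
   most (e n / m)^m choices of each of B and J, so the sum G of these
   exponentials over all levels and blocks has expectation at most n^{-r};
   as G >= 1 off the event, Markov's inequality concludes. *)

(* The weight of an outcome is a
   product over the entries, so sums of products over outcomes factor entrywise;
   this yields the moment generating function of any weighted sum of entries. *)
Section BernoulliLaw.
Variables (R : realType) (L n : nat) (p : 'I_L -> 'I_n -> 'I_n -> R).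
Hypothesis hp : forall l i j, 0 <= p l i j <= 1.

Local Notation T := ('I_L * 'I_n * 'I_n)%type.

Definition pk (k : T) : R := p k.1.1 k.1.2 k.2.

Definition Ex (g : outcome L n -> R) : R := \sum_x bern_weight p x * g x.

Lemma prod_factor (F : T -> bool -> R) :
  \sum_(x : outcome L n) \prod_k F k (x k) = \prod_k (F k true + F k false).
Proof.
rewrite -bigA_distr_bigA /=.
by apply: eq_bigr => k _; rewrite big_bool.
Qed.

Lemma weight_ge0 x : 0 <= bern_weight p x.
Proof.
apply: prodr_ge0 => k _; have /andP[p0 p1] := hp k.1.1 k.1.2 k.2.
by case: (x k); rewrite ?subr_ge0.
Qed.

Lemma weight_sum : \sum_x bern_weight p x = 1.
Proof.
rewrite /bern_weight (prod_factor (fun k b => if b then pk k else 1 - pk k)).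
by rewrite big1 // => k _; rewrite addrC subrK.
Qed.

Lemma Ex_exp (c : T -> R) :
  Ex (fun x => expR (\sum_k c k * (x k)%:R)) =
  \prod_k (1 - pk k + pk k * expR (c k)).
Proof.
rewrite /Ex /bern_weight /=.
under eq_bigr => x _ do rewrite expR_sum -big_split /=.
rewrite (prod_factor (fun k b => (if b then pk k else 1 - pk k) * expR (c k * b%:R))).
by apply: eq_bigr => k _ /=; rewrite mulr1 mulr0 expR0 mulr1 addrC.
Qed.

(* The usual Chernoff relaxation 1 + p (e^c - 1) <= exp (p (e^c - 1)). *)
Lemma Ex_exp_le (c : T -> R) :
  Ex (fun x => expR (\sum_k c k * (x k)%:R)) <=
  expR (\sum_k pk k * (expR (c k) - 1)).
Proof.
rewrite Ex_exp expR_sum; apply: ler_prod => k _.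
have /andP[p0 p1] := hp k.1.1 k.1.2 k.2.
apply/andP; split.
  by apply: addr_ge0; rewrite ?subr_ge0 // mulr_ge0 ?expR_ge0.
apply: le_trans (expR_ge1Dx _); rewrite le_eqVlt; apply/orP; left; apply/eqP.
rewrite /pk; ring.
Qed.

Lemma ExZ a g : Ex (fun x => a * g x) = a * Ex g.
Proof. by rewrite /Ex mulr_sumr; apply: eq_bigr => x _; rewrite mulrCA. Qed.

Lemma Ex_sum (I : finType) (P : pred I) (f : I -> outcome L n -> R) :
  Ex (fun x => \sum_(a | P a) f a x) = \sum_(a | P a) Ex (f a).
Proof.
rewrite /Ex; under eq_bigr => x _ do rewrite mulr_sumr.
by rewrite exchange_big.
Qed.

Lemma Ex_if (b : bool) g :
  Ex (fun x => if b then g x else 0) = if b then Ex g else 0.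
Proof. by case: b => //; rewrite /Ex big1 // => x _; rewrite mulr0. Qed.

Lemma Prob_ge (E : outcome L n -> Prop) (G : outcome L n -> R) :
  (forall x, 0 <= G x) -> (forall x, ~ E x -> 1 <= G x) ->
  1 - Ex G <= Prob p E.
Proof.
move=> G0 G1; rewrite /Prob -weight_sum (bigID (fun x => `[< E x >])) /=.
rewrite -addrA gerDl subr_le0 /Ex.
rewrite [X in _ <= X](bigID (fun x => `[< E x >])) /= ler_wpDl //.
  by apply: sumr_ge0 => x _; rewrite mulr_ge0 ?weight_ge0.
apply: ler_sum => x /asboolPn hx.
by rewrite -[X in X <= _]mulr1 ler_wpM2l ?weight_ge0 ?G1.
Qed.

End BernoulliLaw.

(* e^a - 1 <= a e^a for a >= 0, from 1 - a <= e^{-a}. *)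
Lemma expR_sub1_le (R : realType) (a : R) : 0 <= a -> expR a - 1 <= a * expR a.
Proof.
move=> a0; have h := expR_ge1Dx (- a).
have inv : expR (- a) * expR a = 1 by rewrite -expRD addNr expR0.
have : (1 - a) * expR a <= 1.
  by rewrite -[X in _ <= X]inv ler_wpM2r // ltW // expR_gt0.
nra.
Qed.

Lemma entry_mgf_le (R : realType) (lam v V P q : R) :
  0 <= lam -> 0 <= v -> v <= V -> 0 <= P -> P <= q ->
  P * (expR (lam * v) - 1) <= lam * expR (lam * V) * (v * q).
Proof.
move=> lam0 v0 vV P0 Pq.
have lv0 : 0 <= lam * v by rewrite mulr_ge0.
have eV : expR (lam * v) <= expR (lam * V) by rewrite ler_expR ler_wpM2l.
have h : expR (lam * v) - 1 <= lam * v * expR (lam * V).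
  exact: le_trans (expR_sub1_le lv0) (ler_wpM2l lv0 eV).
have hq : 0 <= lam * v * expR (lam * V) by rewrite mulr_ge0 ?expR_ge0.
apply: le_trans (ler_wpM2l P0 h) _.
apply: le_trans (ler_wpM2r hq Pq) _.
by rewrite le_eqVlt; apply/orP; left; apply/eqP; ring.
Qed.

Lemma wmax_ge (R : realType) (L : nat) (w : 'I_L -> R) l : w l <= wmax w.
Proof. exact: (le_bigmax _ (fun l => w l) l). Qed.

Lemma dl_ge (R : realType) (L n : nat) (p : 'I_L -> 'I_n -> 'I_n -> R) l i j :
  n%:R * p l i j <= dl p l.
Proof.
apply: le_trans (le_bigmax _ _ i).
exact: (le_bigmax _ (fun j => n%:R * p l i j) j).
Qed.

(* A Chernoff bound for the weighted block sum S_{B,J} = sum_{i in B, j in J}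
   Abar_ij: each entry of the block has mean at most d_l / n. *)
Section BlockChernoff.
Variables (R : realType) (L n : nat) (p : 'I_L -> 'I_n -> 'I_n -> R) (w : 'I_L -> R).
Hypothesis hp : forall l i j, 0 <= p l i j <= 1.
Hypothesis hw : forall l, 0 < w l.

Local Notation T := ('I_L * 'I_n * 'I_n)%type.

Lemma sum_entries (G : T -> R) :
  \sum_(k : T) G k = \sum_(l < L) \sum_(i < n) \sum_(j < n) G (l, i, j).
Proof. by rewrite pair_bigA /= pair_bigA /=; apply: eq_bigr => -[[l i] j]. Qed.

Lemma block_sum (F : 'I_L -> 'I_n -> 'I_n -> R) (B J : {set 'I_n}) :
  \sum_(k : T) (if (k.1.2 \in B) && (k.2 \in J) then F k.1.1 k.1.2 k.2 else 0)
  = \sum_(i in B) \sum_(j in J) \sum_(l < L) F l i j.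
Proof.
rewrite sum_entries /= exchange_big [RHS]big_mkcond /=; apply: eq_bigr => i _.
rewrite exchange_big /=.
case: (i \in B) => /=; last by rewrite big1 // => j _; rewrite big1.
rewrite [RHS]big_mkcond /=.
by apply: eq_bigr => j _; case: (j \in J) => //; rewrite big1.
Qed.

Definition block_coef (B J : {set 'I_n}) (k : T) : R :=
  if (k.1.2 \in B) && (k.2 \in J) then w k.1.1 else 0.

Definition block_stat (B J : {set 'I_n}) (x : outcome L n) : R :=
  \sum_k block_coef B J k * (x k)%:R.

Lemma block_stat_Abar B J x :
  block_stat B J x = \sum_(i in B) \sum_(j in J) Abar w x i j.
Proof.
rewrite /block_stat /Abar -(block_sum (fun l i j => w l * Amat R x l i j)).
apply: eq_bigr => -[[l i] j] _; rewrite /block_coef /Amat /=.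
by case: ifP => _; rewrite ?mul0r.
Qed.

Lemma chernoff_block (B J : {set 'I_n}) (lam a : R) :
  (0 < n)%N -> 0 <= lam ->
  Ex p (fun x => expR (lam * (block_stat B J x - a))) <=
  expR (lam * (expR (lam * wmax w) *
     (#|B|%:R * #|J|%:R * ((\sum_(l < L) w l * dl p l) / n%:R)) - a)).
Proof.
move=> n0 lam0; have hn : 0 < n%:R :> R by rewrite ltr0n.
set z := expR (lam * wmax w).
have split_a x : expR (lam * (block_stat B J x - a)) =
   expR (- (lam * a)) * expR (\sum_k (lam * block_coef B J k) * (x k)%:R).
  rewrite -expRD /block_stat mulrBr addrC mulr_sumr; congr (expR (_ + _)).
  by apply: eq_bigr => k _; rewrite mulrA.
under eq_fun => x do rewrite split_a.
rewrite ExZ; apply: le_trans (ler_wpM2l (expR_ge0 _) (Ex_exp_le hp _)) _.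
rewrite -expRD ler_expR mulrBr addrC lerD2r -mulrA.
have entry k : pk p k * (expR (lam * block_coef B J k) - 1) <= lam * z *
    (if (k.1.2 \in B) && (k.2 \in J) then w k.1.1 * (dl p k.1.1 / n%:R) else 0).
  rewrite /block_coef; case: ifP => _; last by rewrite mulr0 expR0 subrr !mulr0.
  have /andP[p0 _] := hp k.1.1 k.1.2 k.2.
  apply: entry_mgf_le; rewrite ?(ltW (hw _)) ?wmax_ge //.
  by rewrite ler_pdivlMr // mulrC dl_ge.
apply: le_trans (ler_sum _ (fun k _ => entry k)) _.
rewrite -mulr_sumr (block_sum (fun l _ _ => w l * (dl p l / n%:R))) -mulrA.
rewrite !ler_wpM2l ?expR_ge0 // le_eqVlt; apply/orP; left; apply/eqP.
under eq_bigr => i _ do rewrite sumr_const.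
rewrite sumr_const mulr_suml -[_ *+ #|B|]mulr_natl -[_ *+ #|J|]mulr_natl.
by under eq_bigr => l _ do rewrite mulrA.
Qed.

End BlockChernoff.

Lemma sum_setpow (R : realType) n (y : R) :
  \sum_(B : {set 'I_n}) y ^+ #|B| = (y + 1) ^+ n.
Proof.
rewrite exprD1n.
transitivity (\sum_(B : {set 'I_n}) \sum_(k < n.+1) (if #|B| == k then y ^+ k else 0)).
  apply: eq_bigr => B _.
  have hB : (#|B| < n.+1)%N by rewrite ltnS; apply: leq_trans (max_card B) _; rewrite card_ord.
  rewrite (bigD1 (Ordinal hB)) //= eqxx big1 ?addr0 // => k hk.
  case: eqP => // e; move: hk; rewrite -val_eqE /= e eqxx //.
rewrite exchange_big; apply: eq_bigr => k _.
rewrite -big_mkcond /= sumr_const.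
by have := card_draws 'I_n k; rewrite card_ord cardsE => <-.
Qed.

(* There are at most (e n / m)^m subsets of [n] of size at most m: compare
   with sum_B (n/m)^m (m/n)^|B| = (n/m)^m (1 + m/n)^n. *)
Lemma count_sets (R : realType) (n m : nat) : (1 <= m)%N -> (m <= n)%N ->
  \sum_(B : {set 'I_n}) (if (#|B| <= m)%N then 1 else 0 : R)
  <= expR (m%:R * (1 + ln (n%:R / m%:R))).
Proof.
move=> m1 mn.
have m0 : 0 < m%:R :> R by rewrite ltr0n.
have n0 : 0 < n%:R :> R by rewrite ltr0n; apply: leq_trans mn.
set y : R := m%:R / n%:R.
have y0 : 0 <= y by rewrite /y divr_ge0 // ltW.
have y1 : y <= 1 by rewrite /y ler_pdivrMr // mul1r ler_nat.
have hq : 0 < n%:R / m%:R :> R by apply: divr_gt0.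
apply: le_trans (_ : \sum_(B : {set 'I_n}) (n%:R / m%:R) ^+ m * y ^+ #|B| <= _).
  apply: ler_sum => B _; case: ifP => hB; last first.
    by apply: mulr_ge0; [apply: exprn_ge0; exact: ltW| exact: exprn_ge0].
  apply: le_trans (_ : (n%:R / m%:R) ^+ m * y ^+ m <= _).
    by rewrite -exprMn /y mulrA divfK ?divff ?expr1n // lt0r_neq0.
  apply: ler_wpM2l; first by apply: exprn_ge0; exact: ltW.
  exact: ler_wiXn2l.
rewrite -mulr_sumr sum_setpow.
rewrite mulrDr mulr1 [m%:R + _]addrC expRD.
apply: ler_pM.
- by apply: exprn_ge0; exact: ltW.
- by apply: exprn_ge0; rewrite addr_ge0.
- by rewrite expRM_natl lnK // posrE.
- apply: le_trans (_ : expR y ^+ n <= _).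
    apply: lerXn2r; rewrite ?nnegrE ?addr_ge0 ?expR_ge0 //.
    by rewrite addrC expR_ge1Dx.
  by rewrite -expRM_natr /y divfK // lt0r_neq0.
Qed.

(* sqrt(m/n) <= alpha means n/m <= (n alpha/m)^2; as n/m >= 1, the scale
   n alpha/m is at least 1 and its logarithm controls ln(n/m). *)
Lemma scale_bounds (R : realType) (n m : nat) (alpha : R) :
  (1 <= m)%N -> (m <= n)%N -> 0 < alpha -> Num.sqrt (m%:R / n%:R) <= alpha ->
  1 <= n%:R * alpha / m%:R /\ ln (n%:R / m%:R) <= 2 * ln (n%:R * alpha / m%:R).
Proof.
move=> m1 mn a0 hs.
have m0 : 0 < m%:R :> R by rewrite ltr0n.
have n0 : 0 < n%:R :> R by rewrite ltr0n; apply: leq_trans mn.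
have hmn : m%:R / n%:R <= alpha ^+ 2.
  rewrite -(sqr_sqrtr (a := m%:R / n%:R)); last by rewrite divr_ge0 // ltW.
  by rewrite lerXn2r // nnegrE ?sqrtr_ge0 // ltW.
have hq2 : n%:R / m%:R <= (n%:R * alpha / m%:R) ^+ 2.
  have e : (n%:R * alpha / m%:R) ^+ 2 = n%:R / m%:R * (alpha ^+ 2 / (m%:R / n%:R)).
    by field; rewrite !lt0r_neq0.
  rewrite e -[X in X <= _]mulr1; apply: ler_wpM2l; first by rewrite divr_ge0 // ltW.
  by rewrite ler_pdivlMr ?mul1r // divr_gt0.
have h1 : 1 <= n%:R / m%:R :> R by rewrite ler_pdivlMr // mul1r ler_nat.
have q0 : 0 < n%:R * alpha / m%:R by rewrite divr_gt0 // mulr_gt0.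
split.
  rewrite leNgt; apply/negP => hlt.
  have : (n%:R * alpha / m%:R) ^+ 2 < 1 by rewrite expr2; nra.
  by rewrite ltNge (le_trans h1 hq2).
have -> : 2 * ln (n%:R * alpha / m%:R) = ln ((n%:R * alpha / m%:R) ^+ 2) :> R.
  by rewrite lnXn // mulr2n; ring.
by rewrite ler_ln ?posrE ?exprn_gt0 // divr_gt0.
Qed.

(* m (1 + ln(n/m)) dominates 1 + ln n, as ln m <= m - 1. *)
Lemma count_exponent_ge (R : realType) (n m : nat) : (1 <= m)%N -> (m <= n)%N ->
  1 + ln (n%:R : R) <= m%:R * (1 + ln (n%:R / m%:R)).
Proof.
move=> m1 mn.
have m0 : 0 < m%:R :> R by rewrite ltr0n.
have m1' : 1 <= m%:R :> R by rewrite ler1n.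
have n0 : 0 < n%:R :> R by rewrite ltr0n; apply: leq_trans mn.
rewrite ln_div ?posrE //.
have hlm : ln (m%:R : R) <= m%:R - 1.
  have := le_ln1Dx (x := m%:R - 1 : R); rewrite [1 + _]addrC subrK; apply; lra.
have hmn : ln (m%:R : R) <= ln n%:R by rewrite ler_ln ?posrE // ler_nat.
have hm0 : 0 <= ln (m%:R : R) by apply: ln_ge0.
nra.
Qed.

(* The exponent budget of one level m: the union over the <= (e n/m)^{2m} pairs
   (B, J) costs 2 m (1 + ln(n/m)); the Chernoff gain u m (12 r - 4), with
   u = 1 + ln(n alpha / m), leaves n^{-(r+1)}. *)
Lemma exponent_budget (R : realType) (n m : nat) (alpha r : R) :
  (1 <= m)%N -> (m <= n)%N -> 0 < alpha -> Num.sqrt (m%:R / n%:R) <= alpha ->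
  1 <= r ->
  2 * (m%:R * (1 + ln (n%:R / m%:R))) -
    (1 + ln (n%:R * alpha / m%:R)) * m%:R * (12 * r - 4) <= - (r + 1) * ln n%:R.
Proof.
move=> m1 mn a0 hs r1.
have [hq hl] := scale_bounds m1 mn a0 hs.
have hM := count_exponent_ge R m1 mn.
have m0 : 0 < m%:R :> R by rewrite ltr0n.
have hl0 : 0 <= ln (n%:R / m%:R : R).
  apply: ln_ge0; rewrite ler_pdivlMr // mul1r ler_nat //.
have hq0 : 0 <= ln (n%:R * alpha / m%:R) by apply: ln_ge0.
set l := ln (n%:R / m%:R) in hl hl0 hM *.
set u := ln (n%:R * alpha / m%:R) in hl hq0 *.
set N := ln (n%:R : R) in hM *.
set M := m%:R * (1 + l) in hM *.
have hMu : M * (6 * r - 2) <= (1 + u) * m%:R * (12 * r - 4).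
  rewrite /M.
  have : 0 <= m%:R * (12 * r - 4) * (u - l / 2).
    by rewrite !mulr_ge0 ?(ltW m0) //; lra.
  nra.
have hN0 : 0 <= N by rewrite /N; apply: ln_ge0; rewrite ler1n; apply: leq_trans mn.
have h1 : 0 <= M * (5 * r - 5) by apply: mulr_ge0; lra.
have h2 : 0 <= (r + 1) * (M - 1 - N) by apply: mulr_ge0; lra.
nra.
Qed.

(* e <= 4, via e^{1/2} <= 2 from e^{-1/2} >= 1/2. *)
Lemma expR1_le4 (R : realType) : expR (1 : R) <= 4.
Proof.
have h := expR_ge1Dx (- (1 / 2) : R).
have e : expR (1 / 2 : R) * expR (- (1 / 2)) = 1 by rewrite -expRD subrr expR0.
have e2 : expR (1 : R) = expR (1 / 2) * expR (1 / 2) by rewrite -expRD; congr expR; field.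
have a0 := expR_gt0 (1 / 2 : R).
rewrite e2.
set a := expR (1 / 2 : R) in e a0 *.
set b := expR (- (1 / 2) : R) in h e *.
have : a <= 2 by nra.
nra.
Qed.

Lemma levels_total (R : realType) (n : nat) (r : R) :
  \sum_(m < n.+1) (if (1 <= m)%N then expR (- (r + 1) * ln n%:R) else 0)
  <= n%:R `^ (- r).
Proof.
rewrite big_ord_recl /= add0r.
rewrite (eq_bigr (fun _ => expR (- (r + 1) * ln n%:R))) // sumr_const card_ord.
have [->|n0] := posnP n; first by rewrite mulr0n powR_ge0.
have en : expR (ln n%:R) = n%:R :> R by rewrite lnK // posrE ltr0n.
rewrite -[expR _ *+ n]mulr_natl /powR ifF ?gt_eqF ?ltr0n //.
rewrite -[X in X * expR _]en -expRD ler_expR; lra.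
Qed.

Section UnionBound.
Variables (R : realType) (n L : nat) (p : 'I_L -> 'I_n -> 'I_n -> R)
  (w : 'I_L -> R) (alpha r : R).
Hypothesis hp : forall l i j, 0 <= p l i j <= 1.
Hypothesis hw : forall l, 0 < w l.
Hypothesis hD : 0 < \sum_(l < L) w l * dl p l.
Hypothesis ha : 0 < alpha.
Hypothesis hr : 1 <= r.

Local Notation D := (\sum_(l < L) w l * dl p l).
Local Notation W := (wmax w).
Local Notation t := (12 * r * alpha * D).

Definition level (m : nat) : bool :=
  [&& (1 <= m)%N, (m <= n)%N & Num.sqrt (m%:R / n%:R) <= alpha].

(* Chernoff parameter at level m: lam m = u m / W, so that lam m W = u m. *)
Definition u (m : nat) : R := 1 + ln (n%:R * alpha / m%:R).
Definition lam (m : nat) : R := u m / W.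

Definition bad_block (m : nat) (B J : {set 'I_n}) : bool :=
  [&& level m, (#|B| <= m)%N, #|J| == m & m%:R * W < #|B|%:R * alpha * D].

Definition block_term (m : nat) (B J : {set 'I_n}) (x : outcome L n) : R :=
  if bad_block m B J then expR (lam m * (block_stat w B J x - #|B|%:R * t)) else 0.

Definition G (x : outcome L n) : R :=
  \sum_(m < n.+1) \sum_(B : {set 'I_n}) \sum_(J : {set 'I_n}) block_term m B J x.

Definition light_rows (x : outcome L n) : Prop :=
  forall m : nat, (1 <= m <= n)%N -> Num.sqrt (m%:R / n%:R) <= alpha ->
  forall I J : {set 'I_n}, #|I| = m -> #|J| = m ->
    (#|[set i in I | ~~ (\sum_(j in J) Abar w x i j <= t)]|)%:R
    <= m%:R * W / (alpha * D).

(* There is at least one layer, since D > 0. *)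
Lemma W_gt0 : 0 < W.
Proof.
case: (pickP (fun _ : 'I_L => true)) => [l0 _|noL].
  exact: lt_le_trans (hw l0) (wmax_ge w l0).
by move: hD; rewrite big_pred0 ?ltxx.
Qed.

Lemma lam_ge0 m : level m -> 0 <= lam m.
Proof.
case/and3P=> m1 mn hs; have [q1 _] := scale_bounds m1 mn ha hs.
by rewrite divr_ge0 ?(ltW W_gt0) // addr_ge0 ?ln_ge0.
Qed.

Lemma block_term_ge0 m B J x : 0 <= block_term m B J x.
Proof. by rewrite /block_term; case: ifP => _ //; exact: expR_ge0. Qed.

Lemma G_ge0 x : 0 <= G x.
Proof. by do 3!(apply: sumr_ge0 => ? _); exact: block_term_ge0. Qed.

Lemma G_ge_block x m B J : (m <= n)%N -> bad_block m B J ->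
  #|B|%:R * t <= block_stat w B J x -> 1 <= G x.
Proof.
move=> mn hbad hS; have hm : (m < n.+1)%N by rewrite ltnS.
apply: le_trans (_ : block_term m B J x <= _).
  rewrite /block_term hbad; apply: le_trans (expR_ge1Dx _).
  rewrite lerDl mulr_ge0 ?subr_ge0 //; apply: lam_ge0; by case/and4P: hbad.
rewrite /G (bigD1 (Ordinal hm)) //= (bigD1 B) //= (bigD1 J) //= -!addrA lerDl.
by rewrite !addr_ge0 //; do ?[apply: sumr_ge0 => ? _]; exact: block_term_ge0.
Qed.

(* Off the event, the heavy rows of some (I, J) form a violating block. *)
Lemma G_ge1 x : ~ light_rows x -> 1 <= G x.
Proof.
move=> hx; rewrite leNgt; apply/negP => hG; apply: hx.
move=> m /andP[m1 mn] hs I J hI hJ; rewrite leNgt; apply/negP => hlt.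
set Bs := [set i in I | ~~ (\sum_(j in J) Abar w x i j <= t)] in hlt.
suff : 1 <= G x by rewrite leNgt hG.
apply: (G_ge_block mn (B := Bs) (J := J)).
  rewrite /bad_block /level m1 mn hs hJ eqxx /=; apply/andP; split.
    by rewrite -hI subset_leq_card //; apply/fintype.subsetP => i; rewrite inE => /andP[].
  by rewrite -mulrA -ltr_pdivrMr // mulr_gt0.
rewrite block_stat_Abar mulr_natl -sumr_const.
by apply: ler_sum => i; rewrite inE => /andP[_ hi]; apply: ltW; rewrite ltNge.
Qed.

(* Chernoff at level m: e^{u} = e n alpha / m turns the mean term into
   e alpha |B| D <= 4 alpha |B| D, and |B| alpha D > m W gives the gain. *)
Lemma block_mgf_le m B J : bad_block m B J ->
  Ex p (fun x => expR (lam m * (block_stat w B J x - #|B|%:R * t)))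
  <= expR (- (u m * m%:R * (12 * r - 4))).
Proof.
move=> hbad; have /and4P[hl _ /eqP hJ hWB] := hbad.
have /and3P[m1 mn hs] := hl.
have hn : 0 < n%:R :> R by rewrite ltr0n (leq_trans m1 mn).
have hm : 0 < m%:R :> R by rewrite ltr0n.
have lam0 := lam_ge0 hl.
apply: le_trans (chernoff_block hp hw B J _ (leq_trans m1 mn) lam0) _.
have lamW : lam m * W = u m by rewrite /lam divfK // gt_eqF // W_gt0.
have eu : expR (u m) = expR 1 * (n%:R * alpha / m%:R).
  by rewrite /u expRD lnK // posrE !divr_gt0 // mulr_gt0.
rewrite ler_expR lamW eu hJ; set b := #|B|%:R.
have -> : expR 1 * (n%:R * alpha / m%:R) * (b * m%:R * (D / n%:R))
    = expR 1 * (alpha * (b * D)) by field; rewrite !gt_eqF.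
have abD : 0 <= alpha * (b * D) by rewrite !mulr_ge0 // ltW.
have e4 := expR1_le4 R.
have gain : expR 1 * (alpha * (b * D)) - b * t <= - ((12 * r - 4) * (alpha * (b * D))).
  nra.
apply: le_trans (ler_wpM2l lam0 gain) _.
have -> : u m * m%:R * (12 * r - 4) = lam m * ((12 * r - 4) * (m%:R * W)).
  by rewrite -lamW; ring.
have margin : 0 <= (12 * r - 4) * (alpha * (b * D) - m%:R * W).
  rewrite mulr_ge0 //; first by move: hr; lra.
  by move: hWB; rewrite /b; nra.
rewrite mulrN lerN2; nra.
Qed.

(* One level: at most (e n / m)^m choices for each of B and J. *)
Lemma level_sum_le m : level m ->
  \sum_(B : {set 'I_n}) \sum_(J : {set 'I_n}) Ex p (block_term m B J)
  <= expR (- (r + 1) * ln n%:R).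
Proof.
move=> hl; have /and3P[m1 mn hs] := hl.
set q := expR (- (u m * m%:R * (12 * r - 4))).
pose small (B : {set 'I_n}) : R := if (#|B| <= m)%N then 1 else 0.
set cnt := \sum_(B : {set 'I_n}) small B.
apply: le_trans (_ : \sum_B \sum_J q * (small B * small J) <= _).
  apply: ler_sum => B _; apply: ler_sum => J _; rewrite /block_term Ex_if.
  case: ifP => hbad; last by rewrite /small !mulr_ge0 ?expR_ge0 //; case: ifP.
  have /and4P[_ hB /eqP hJ _] := hbad.
  by rewrite /small hB hJ leqnn !mulr1 block_mgf_le.
rewrite (_ : \sum_B \sum_J _ = q * (cnt * cnt)); last first.
  by rewrite big_distrlr mulr_sumr; apply: eq_bigr => B _; rewrite mulr_sumr.
have cnt0 : 0 <= cnt by apply: sumr_ge0 => B _; rewrite /small; case: ifP.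
have hcnt := count_sets R m1 mn.
apply: le_trans (ler_wpM2l (expR_ge0 _) (ler_pM cnt0 cnt0 hcnt hcnt)) _.
rewrite /q -!expRD ler_expR.
have := exponent_budget m1 mn ha hs hr; rewrite /u; lra.
Qed.

Lemma Ex_G_le : Ex p G <= n%:R `^ (- r).
Proof.
apply: le_trans (levels_total n r); rewrite /G Ex_sum; apply: ler_sum => m _.
rewrite Ex_sum; under eq_bigr => B _ do rewrite Ex_sum.
case: (boolP (level m)) => hl.
  by have /and3P[-> _ _] := hl; exact: level_sum_le.
rewrite big1 => [|B _]; first by case: ifP => _ //; exact: expR_ge0.
by rewrite big1 // => J _; rewrite /block_term Ex_if /bad_block (negbTE hl).
Qed.

End UnionBound.

Theorem mainTheorem13 (R : realType) (c1 : R) (hc1 : 1 <= c1) :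
  exists C : R, 0 < C /\
  forall (n L : nat) (p : 'I_L -> 'I_n -> 'I_n -> R) (w : 'I_L -> R)
         (alpha r : R),
    (forall l i j, 0 <= p l i j <= 1) ->
    (forall l, 0 < w l) ->
    \sum_(l < L) w l = 1 ->
    0 < \sum_(l < L) w l * dl p l ->
    (forall (i : 'I_n) (J : {set 'I_n}),
       wmax w * (\sum_(l < L) \sum_(j in J) p l i j)
       <= c1 * (\sum_(l < L) \sum_(j in J) w l * p l i j)) ->
    0 < alpha -> 1 <= r ->
    1 - (n%:R) `^ (- r) <=
    Prob p (fun x : outcome L n =>
      forall (m : nat), (1 <= m <= n)%N ->
        Num.sqrt (m%:R / n%:R) <= alpha ->
        forall I J : {set 'I_n}, #|I| = m -> #|J| = m ->
          (#|[set i in I | ~~ (\sum_(j in J) Abar w x i j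
                               <= C * r * alpha * \sum_(l < L) w l * dl p l)]|)%:R
          <= m%:R * wmax w / (alpha * \sum_(l < L) w l * dl p l)).
Proof.
exists 12; split; first by rewrite ltr0n.
move=> n L p w alpha r hp hw _ hD _ ha hr.
apply: le_trans (Prob_ge hp (G_ge0 p w alpha r) (G_ge1 hw hD ha)).
by rewrite lerD2l lerN2 Ex_G_le.
Qed.
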